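(* Let $\Omega$ be an infinite set, $w:\Omega\to\mathbb R^{+}$ a function with strictly positive values, and $I$ a fine ideal of $\mathfrak F=\mathfrak F(\mathcal P_{fin}(\Omega),\mathbb R)$. Let $\mathcal R_I=\mathfrak F/I$ and $J_I:\mathfrak F\to\mathcal R_I$, $J_I(\varphi)=\varphi+I$, the canonical projection. For $A\subseteq\Omega$ and $u:A\to\mathbb R$ put $\sum_{\omega\in A}u(\omega):=J_I\big(\lambda\mapsto\sum_{\omega\in A\cap\lambda}u(\omega)\big)$, and define $$P_I(A)=\frac{\sum_{\omega\in A}w(\omega)}{\sum_{\omega\in\Omega}w(\omega)}.$$ Then $\mathcal R_I$ is a superreal field (with $\mathbb R$ embedded via constant functions), and $(\Omega,P_I,J_I)$ is a NAP-space, i.e. it satisfies (NAP0)–(NAP4).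
   Context: $\mathcal P_{fin}(\Omega)$ denotes the set of finite subsets of $\Omega$, and $\mathfrak F(\mathcal P_{fin}(\Omega),\mathbb R)$ the real algebra of all functions $\mathcal P_{fin}(\Omega)\to\mathbb R$ with pointwise operations. For $\omega\in\Omega$, $\chi_\lambda(\omega)=1$ if $\omega\in\lambda$ and $0$ otherwise. An ideal $I$ of $\mathfrak F$ is fine if it is maximal and, for every $\omega\in\Omega$, $\lambda\mapsto1-\chi_\lambda(\omega)$ belongs to $I$. A superreal field is an ordered field containing $\mathbb R$ as an ordered subfield. The NAP axioms for a triple $(\Omega,P,J)$ with $P:\mathcal P(\Omega)\to\mathcal R$ ($\mathcal R$ a superreal field) and $J:\mathfrak F\to\mathcal R$ an algebra homomorphism are: (NAP0) $P$ is defined on all of $\mathcal P(\Omega)$ with values in the superreal field $\mathcal R$; (NAP1) $P(A)\ge0$; (NAP2) $P(A)=1$ iff $A=\Omega$; (NAP3) $P(A\cup B)=P(A)+P(B)$ when $A\cap B=\varnothing$; (NAP4) with $P(A\mid B)=P(A\cap B)/P(B)$ for $B\ne\varnothing$, $P(A\mid\lambda)\in\mathbb R$ for all nonempty finite $\lambda$ and all $A$, and $P(A)=J(\varphi_A)$ where $\varphi_A(\lambda)=P(A\mid\lambda)$ for nonempty finite $\lambda$ ($\varphi_A(\varnothing)$ arbitrary). *)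

From Stdlib Require Import Reals List Classical ClassicalEpsilon
  FunctionalExtensionality PropExtensionality.
Open Scope R_scope.

Definition Pfin (Omega : Type) : Type :=
  { S : Omega -> Prop | exists l : list Omega, NoDup l /\ forall x, S x <-> In x l }.

Definition Fun (Omega : Type) : Type := Pfin Omega -> R.

Definition infinite_type (Omega : Type) : Prop :=
  ~ exists l : list Omega, forall x, In x l.

Definition chi {Omega : Type} (lam : Pfin Omega) (w : Omega) : R :=
  if excluded_middle_informative (proj1_sig lam w) then 1 else 0.

Definition is_ideal {Omega : Type} (K : Fun Omega -> Prop) : Prop :=
  K (fun _ => 0) /\
  (forall f g, K f -> K g -> K (fun l => f l + g l)) /\
  (forall f g, K f -> K (fun l => g l * f l)).

Definition is_maximal_ideal {Omega : Type} (I : Fun Omega -> Prop) : Prop :=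
  is_ideal I /\ ~ I (fun _ => 1) /\
  (forall K : Fun Omega -> Prop, is_ideal K -> (forall f, I f -> K f) ->
     (forall f, K f -> I f) \/ (forall f, K f)).

Definition is_fine_ideal {Omega : Type} (I : Fun Omega -> Prop) : Prop :=
  is_maximal_ideal I /\ forall w : Omega, I (fun lam => 1 - chi lam w).

Definition Quot {Omega : Type} (I : Fun Omega -> Prop) : Type :=
  { C : Fun Omega -> Prop |
    exists phi : Fun Omega, C = (fun psi => I (fun l => psi l - phi l)) }.

Definition JI {Omega : Type} (I : Fun Omega -> Prop) (phi : Fun Omega) : Quot I :=
  exist _ (fun psi => I (fun l => psi l - phi l)) (ex_intro _ phi eq_refl).

Definition rep {Omega : Type} {I : Fun Omega -> Prop} (x : Quot I) : Fun Omega :=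
  proj1_sig (constructive_indefinite_description _ (proj2_sig x)).

Definition Qzero {Omega} (I : Fun Omega -> Prop) : Quot I := JI I (fun _ => 0).
Definition Qone {Omega} (I : Fun Omega -> Prop) : Quot I := JI I (fun _ => 1).
Definition Qadd {Omega} {I : Fun Omega -> Prop} (x y : Quot I) : Quot I :=
  JI I (fun l => rep x l + rep y l).
Definition Qmul {Omega} {I : Fun Omega -> Prop} (x y : Quot I) : Quot I :=
  JI I (fun l => rep x l * rep y l).
Definition Qopp {Omega} {I : Fun Omega -> Prop} (x : Quot I) : Quot I :=
  JI I (fun l => - rep x l).
Definition Qemb {Omega} (I : Fun Omega -> Prop) (r : R) : Quot I := JI I (fun _ => r).
(** Multiplicative inverse (a chosen one if it exists, 0 otherwise). *)
Definition Qinv {Omega} {I : Fun Omega -> Prop} (x : Quot I) : Quot I :=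
  match excluded_middle_informative (exists y, Qmul x y = Qone I) with
  | left h => proj1_sig (constructive_indefinite_description _ h)
  | right _ => Qzero I
  end.
Definition Qdiv {Omega} {I : Fun Omega -> Prop} (x y : Quot I) : Quot I :=
  Qmul x (Qinv y).

Definition is_field {Q : Type} (z o : Q) (add mul : Q -> Q -> Q) (opp : Q -> Q) : Prop :=
  (forall x y k, add x (add y k) = add (add x y) k) /\
  (forall x y, add x y = add y x) /\
  (forall x, add z x = x) /\
  (forall x, add x (opp x) = z) /\
  (forall x y k, mul x (mul y k) = mul (mul x y) k) /\
  (forall x y, mul x y = mul y x) /\
  (forall x, mul o x = x) /\
  (forall x y k, mul x (add y k) = add (mul x y) (mul x k)) /\
  z <> o /\
  (forall x, x <> z -> exists y, mul x y = o).

Definition is_ordered_field {Q : Type} (z o : Q) (add mul : Q -> Q -> Q) (opp : Q -> Q)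
  (le : Q -> Q -> Prop) : Prop :=
  is_field z o add mul opp /\
  (forall x, le x x) /\
  (forall x y, le x y -> le y x -> x = y) /\
  (forall x y k, le x y -> le y k -> le x k) /\
  (forall x y, le x y \/ le y x) /\
  (forall x y k, le x y -> le (add x k) (add y k)) /\
  (forall x y, le z x -> le z y -> le z (mul x y)).

Definition is_superreal_field {Q : Type} (z o : Q) (add mul : Q -> Q -> Q) (opp : Q -> Q)
  (le : Q -> Q -> Prop) (emb : R -> Q) : Prop :=
  is_ordered_field z o add mul opp le /\
  emb 0 = z /\ emb 1 = o /\
  (forall r s, emb (r + s) = add (emb r) (emb s)) /\
  (forall r s, emb (r * s) = mul (emb r) (emb s)) /\
  (forall r s, r <= s <-> le (emb r) (emb s)).

Definition fsum {Omega : Type} (lam : Pfin Omega) (A : Omega -> Prop) (u : Omega -> R) : R :=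
  fold_right Rplus 0
    (map (fun x => if excluded_middle_informative (A x) then u x else 0)
       (proj1_sig (constructive_indefinite_description _ (proj2_sig lam)))).

Definition Isum {Omega : Type} (I : Fun Omega -> Prop) (A : Omega -> Prop) (u : Omega -> R)
  : Quot I := JI I (fun lam => fsum lam A u).

Definition P_I {Omega : Type} (I : Fun Omega -> Prop) (w : Omega -> R) (A : Omega -> Prop)
  : Quot I := Qdiv (Isum I A w) (Isum I (fun _ => True) w).

Definition Pcond {Omega Q : Type} (mul : Q -> Q -> Q) (inv : Q -> Q)
  (P : (Omega -> Prop) -> Q) (A B : Omega -> Prop) : Q :=
  mul (P (fun x => A x /\ B x)) (inv (P B)).

(** The NAP axioms (NAP1)-(NAP4) for (Omega, P, J); (NAP0) is the typing of
    P together with the superreal-field property of the codomain. *)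
Definition NAP_axioms {Omega Q : Type} (z o : Q) (add mul : Q -> Q -> Q) (inv : Q -> Q)
  (le : Q -> Q -> Prop) (emb : R -> Q)
  (P : (Omega -> Prop) -> Q) (J : Fun Omega -> Q) : Prop :=
  (forall f g, J (fun l => f l + g l) = add (J f) (J g)) /\
  (forall f g, J (fun l => f l * g l) = mul (J f) (J g)) /\
  (forall r f, J (fun l => r * f l) = mul (emb r) (J f)) /\
  J (fun _ => 1) = o /\
  (forall A, le z (P A)) /\
  (forall A, P A = o <-> (forall x, A x)) /\
  (forall A B, (forall x, ~ (A x /\ B x)) -> P (fun x => A x \/ B x) = add (P A) (P B)) /\
  (forall (A : Omega -> Prop) (lam : Pfin Omega), (exists x, proj1_sig lam x) ->
     exists r : R, Pcond mul inv P A (proj1_sig lam) = emb r) /\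
  (forall (A : Omega -> Prop) (phi : Fun Omega),
     (forall lam : Pfin Omega, (exists x, proj1_sig lam x) ->
        emb (phi lam) = Pcond mul inv P A (proj1_sig lam)) ->
     P A = J phi).

From Stdlib Require Import Reals List Classical ClassicalEpsilon Permutation
  FunctionalExtensionality PropExtensionality Lra Psatz.
Open Scope R_scope.

(** A maximal ideal I of the algebra F of real functions on P_fin(Omega) is
    described by the family of "I-large" sets of finite subsets: those
    containing the zero set of some element of I.  Because squares are
    nonnegative, I-large sets are closed under intersection; maximality makes
    I prime, so for every S either S or its complement is I-large, and the
    empty set is not.  Two functions have the same class in F/I iff they
    agree on an I-large set, so every pointwise identity or inequality that
    holds I-almost everywhere transfers to F/I; ordering classes by "f <= g
    on an I-large set" turns F/I into a superreal field.
    If I is moreover fine, then for each finite lambda the set of all mu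
    containing lambda is I-large.  On that set the finite sums defining
    P_I(A cap lambda) / P_I(lambda) are sums over lambda only, so conditional
    probabilities on finite sets are real numbers and P_I is recovered from
    them by J_I: these are (NAP4); (NAP1)-(NAP3) are pointwise facts about
    finite sums of the positive weight w. *)

Lemma pred_ext {Omega : Type} (K : Fun Omega -> Prop) (f g : Fun Omega) :
  K f -> (forall l, f l = g l) -> K g.
Proof. intros Hf E. replace g with f; auto. apply functional_extensionality; auto. Qed.

Lemma JI_congr {Omega : Type} (I : Fun Omega -> Prop) (f g : Fun Omega) :
  (forall l, f l = g l) -> JI I f = JI I g.
Proof. intros E. f_equal. apply functional_extensionality; auto. Qed.

Section LargeSets.

Context {Omega : Type} (I : Fun Omega -> Prop) (HI : is_maximal_ideal I).

Definition large (S : Pfin Omega -> Prop) : Prop :=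
  exists f, I f /\ forall l, f l = 0 -> S l.

(** A function vanishing on an I-large set belongs to I (divide by f off its zeros). *)
Lemma large_zero_in_ideal (g : Fun Omega) : large (fun l => g l = 0) -> I g.
Proof.
  intros [f [Hf Hz]]. destruct HI as [[_ [_ Hmul]] _].
  apply pred_ext with (fun l => (if Req_dec_T (f l) 0 then 0 else g l / f l) * f l).
  - apply Hmul; auto.
  - intro l; destruct (Req_dec_T (f l) 0) as [e|n].
    + rewrite (Hz l e); ring.
    + field; auto.
Qed.

Lemma large_mono (S T : Pfin Omega -> Prop) :
  large S -> (forall l, S l -> T l) -> large T.
Proof. intros [f [Hf Hz]] H; exists f; split; auto. Qed.

(** Intersection: the zero set of f^2 + g^2 is the intersection of the zero sets. *)
Lemma large_and (S T : Pfin Omega -> Prop) :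
  large S -> large T -> large (fun l => S l /\ T l).
Proof.
  intros [f [Hf Hzf]] [g [Hg Hzg]]. destruct HI as [[_ [Hadd Hmul]] _].
  exists (fun l => f l * f l + g l * g l); split.
  - apply Hadd; apply Hmul; auto.
  - intros l e. split; [apply Hzf | apply Hzg]; nra.
Qed.

Lemma large_all (S : Pfin Omega -> Prop) : (forall l, S l) -> large S.
Proof. intros H. destruct HI as [[H0 _] _]. exists (fun _ => 0); split; auto. Qed.

Lemma not_large_empty : ~ large (fun _ => False).
Proof.
  intros [f [Hf Hz]]. destruct HI as [[_ [_ Hmul]] [H1 _]]. apply H1.
  apply pred_ext with (fun l => / f l * f l); [apply Hmul; auto|].
  intro l. apply Rinv_l. intro e; exact (Hz l e).
Qed.

Lemma large_const (P : Prop) : large (fun _ => P) -> P.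
Proof.
  intros H. apply NNPP; intro nP. apply not_large_empty.
  apply (large_mono _ _ H). auto.
Qed.

(** A maximal ideal is prime: if f g is in I and f is not, the ideal I + (f)
    is everything, so 1 = a + b f with a in I and g = g a + b (f g) is in I. *)
Lemma maximal_ideal_prime (f g : Fun Omega) : I (fun l => f l * g l) -> I f \/ I g.
Proof.
  intros Hfg. destruct (classic (I f)) as [h|nf]; [left; auto|right].
  destruct HI as [[H0 [Hadd Hmul]] [_ Hmax]].
  set (K := fun h : Fun Omega => exists a b, I a /\ forall l, h l = a l + b l * f l).
  assert (HK : is_ideal K).
  { split; [|split].
    - exists (fun _ => 0), (fun _ => 0); split; auto. intro; ring.
    - intros h1 h2 [a1 [b1 [Ha1 E1]]] [a2 [b2 [Ha2 E2]]].
      exists (fun l => a1 l + a2 l), (fun l => b1 l + b2 l); split; auto.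
      intro l; rewrite E1, E2; ring.
    - intros h1 h2 [a1 [b1 [Ha1 E1]]].
      exists (fun l => h2 l * a1 l), (fun l => h2 l * b1 l); split; auto.
      intro l; rewrite E1; ring. }
  destruct (Hmax K HK) as [Kin|Kall].
  - intros h Hh. exists h, (fun _ => 0); split; auto. intro; ring.
  - exfalso; apply nf, Kin. exists (fun _ => 0), (fun _ => 1); split; auto. intro; ring.
  - destruct (Kall (fun _ => 1)) as [a [b [Ha E]]].
    apply pred_ext with (fun l => g l * a l + b l * (f l * g l)).
    + apply Hadd; apply Hmul; auto.
    + intro l. replace (g l) with (g l * 1) at 3 by ring. rewrite (E l). ring.
Qed.

(** Ultrafilter property: apply primality to the indicators of S and its complement. *)
Lemma large_or_compl (S : Pfin Omega -> Prop) : large S \/ large (fun l => ~ S l).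
Proof.
  set (a := fun l => if excluded_middle_informative (S l) then 0 else 1).
  destruct (maximal_ideal_prime a (fun l => 1 - a l)) as [H|H].
  - destruct HI as [[H0 _] _]. apply pred_ext with (fun _ => 0); auto.
    intro l; unfold a; destruct (excluded_middle_informative (S l)); ring.
  - left; exists a; split; auto. intros l; unfold a.
    destruct (excluded_middle_informative (S l)); auto. intro; lra.
  - right; exists (fun l => 1 - a l); split; auto. intros l; unfold a.
    destruct (excluded_middle_informative (S l)); auto; intro; lra.
Qed.

Lemma Quot_eq (x y : Quot I) : proj1_sig x = proj1_sig y -> x = y.
Proof. destruct x, y; simpl; intro; subst; f_equal; apply proof_irrelevance. Qed.

Lemma JI_eq_iff (f g : Fun Omega) :
  JI I f = JI I g <-> large (fun l => f l = g l).
Proof.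
  pose proof HI as [[H0 [Hadd Hmul]] _].
  assert (Hff : I (fun l => f l - f l)) by (apply pred_ext with (fun _ => 0); auto; intro; ring).
  split.
  - intro H. apply (f_equal (@proj1_sig _ _)) in H.
    pose proof (equal_f H f) as E; simpl in E. rewrite E in Hff.
    exists (fun l => f l - g l); split; auto. intros; lra.
  - intro H. apply large_mono with (T := fun l => f l - g l = 0) in H; [|intros; lra].
    apply large_zero_in_ideal in H.
    apply Quot_eq; simpl. apply functional_extensionality; intro psi.
    apply propositional_extensionality; split; intro Hp.
    + apply pred_ext with (fun l => (psi l - f l) + (f l - g l)); [apply Hadd; auto|].
      intro; ring.
    + apply pred_ext with (fun l => (psi l - g l) + (-1) * (f l - g l)); [apply Hadd; auto|].
      intro; ring.
Qed.

Lemma rep_JI (f : Fun Omega) : large (fun l => rep (JI I f) l = f l).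
Proof.
  apply JI_eq_iff. unfold rep.
  destruct (constructive_indefinite_description _ (proj2_sig (JI I f))) as [phi Hphi].
  apply Quot_eq; simpl in *. symmetry; exact Hphi.
Qed.

Lemma JI_rep (x : Quot I) : JI I (rep x) = x.
Proof.
  apply Quot_eq. unfold rep.
  destruct (constructive_indefinite_description _ (proj2_sig x)) as [phi Hphi].
  simpl. auto.
Qed.

Lemma Quot_JI (x : Quot I) : exists f, x = JI I f.
Proof. exists (rep x); symmetry; apply JI_rep. Qed.

Lemma Qadd_JI (f g : Fun Omega) : Qadd (JI I f) (JI I g) = JI I (fun l => f l + g l).
Proof.
  apply JI_eq_iff, (large_mono _ _ (large_and _ _ (rep_JI f) (rep_JI g))).
  intros l [e1 e2]; rewrite e1, e2; auto.
Qed.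

Lemma Qmul_JI (f g : Fun Omega) : Qmul (JI I f) (JI I g) = JI I (fun l => f l * g l).
Proof.
  apply JI_eq_iff, (large_mono _ _ (large_and _ _ (rep_JI f) (rep_JI g))).
  intros l [e1 e2]; rewrite e1, e2; auto.
Qed.

Lemma Qopp_JI (f : Fun Omega) : Qopp (JI I f) = JI I (fun l => - f l).
Proof.
  apply JI_eq_iff, (large_mono _ _ (rep_JI f)). intros l e; rewrite e; auto.
Qed.

Lemma JI_invertible (f : Fun Omega) :
  large (fun l => f l <> 0) -> Qmul (JI I f) (JI I (fun l => / f l)) = Qone I.
Proof.
  intros NZ. unfold Qone. rewrite Qmul_JI, JI_eq_iff.
  apply (large_mono _ _ NZ). intros l e; apply Rinv_r; auto.
Qed.

(** The inverse is pointwise inversion (with the real convention / 0 = 0). *)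
Lemma Qinv_JI (f : Fun Omega) : Qinv (JI I f) = JI I (fun l => / f l).
Proof.
  unfold Qinv. destruct (excluded_middle_informative _) as [h|h].
  - destruct (constructive_indefinite_description _ h) as [y Hy]; simpl.
    destruct (Quot_JI y) as [g ->]. unfold Qone in Hy.
    rewrite Qmul_JI, JI_eq_iff in Hy. apply JI_eq_iff.
    apply (large_mono _ _ Hy). intros l e.
    assert (f l <> 0) by (intro z; rewrite z in e; lra).
    apply Rmult_eq_reg_l with (f l); auto. rewrite e, Rinv_r; auto.
  - unfold Qzero. apply JI_eq_iff.
    destruct (large_or_compl (fun l => f l = 0)) as [Z|NZ].
    + apply (large_mono _ _ Z). intros l e; rewrite e, Rinv_0; auto.
    + exfalso; apply h. eexists; apply JI_invertible, NZ.
Qed.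

Definition Qle (x y : Quot I) : Prop := large (fun l => rep x l <= rep y l).

Lemma Qle_JI (f g : Fun Omega) : Qle (JI I f) (JI I g) <-> large (fun l => f l <= g l).
Proof.
  unfold Qle. pose proof (large_and _ _ (rep_JI f) (rep_JI g)) as Hrep.
  split; intro H; apply (large_mono _ _ (large_and _ _ Hrep H));
    intros l [[e1 e2] e]; rewrite ?e1, ?e2 in *; auto; lra.
Qed.

Ltac as_class x := let f := fresh "f" in destruct (Quot_JI x) as [f ->].

(** F/I is a field: the ring identities hold pointwise, and a nonzero class
    is nonzero on a large set, where it can be inverted. *)
Lemma Quot_field : is_field (Qzero I) (Qone I) Qadd Qmul Qopp.
Proof.
  unfold Qzero, Qone.
  repeat split; intros;
    repeat match goal with x : Quot I |- _ => as_class x end;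
    rewrite ?Qopp_JI, ?Qadd_JI, ?Qmul_JI, ?Qadd_JI.
  1-8: apply JI_congr; intro; ring.
  - intro H. apply not_large_empty. apply JI_eq_iff in H.
    apply (large_mono _ _ H); intros; lra.
  - destruct (large_or_compl (fun l => f l = 0)) as [Z|NZ].
    + exfalso. match goal with H : JI I f <> _ |- _ => apply H, JI_eq_iff, Z end.
    + eexists; apply JI_invertible, NZ.
Qed.

(** The order is total (ultrafilter property) and compatible with + and *. *)
Lemma Quot_order :
  (forall x, Qle x x) /\
  (forall x y, Qle x y -> Qle y x -> x = y) /\
  (forall x y k, Qle x y -> Qle y k -> Qle x k) /\
  (forall x y, Qle x y \/ Qle y x) /\
  (forall x y k, Qle x y -> Qle (Qadd x k) (Qadd y k)) /\
  (forall x y, Qle (Qzero I) x -> Qle (Qzero I) y -> Qle (Qzero I) (Qmul x y)).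
Proof.
  unfold Qzero.
  repeat split; intros;
    repeat match goal with x : Quot I |- _ => as_class x end;
    rewrite ?Qadd_JI, ?Qmul_JI, ?Qle_JI in *.
  - apply large_all; intro; lra.
  - apply JI_eq_iff. apply (large_mono _ _ (large_and _ _ H H0)); intros l []; lra.
  - apply (large_mono _ _ (large_and _ _ H H0)); intros l []; lra.
  - destruct (large_or_compl (fun l => f l <= f0 l)) as [Hle|Hgt];
      [left + right; exact Hle|];
      [left + right; apply (large_mono _ _ Hgt); intros; lra].
  - apply (large_mono _ _ H); intros; lra.
  - apply (large_mono _ _ (large_and _ _ H H0)); intros l []. apply Rmult_le_pos; auto.
Qed.

Lemma Quot_superreal : is_superreal_field (Qzero I) (Qone I) Qadd Qmul Qopp Qle (Qemb I).
Proof.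
  split; [split; [exact Quot_field | exact Quot_order]|].
  unfold Qemb. repeat split.
  - intros r s; rewrite Qadd_JI; auto.
  - intros r s; rewrite Qmul_JI; auto.
  - intros H; apply Qle_JI, large_all; auto.
  - intros H; apply (Qle_JI (fun _ => r) (fun _ => s)) in H. apply (large_const _ H).
Qed.

End LargeSets.

Section FiniteSums.

Definition lsum {T : Type} (g : T -> R) (l : list T) : R := fold_right Rplus 0 (map g l).

Lemma lsum_ext {T : Type} (g h : T -> R) l :
  (forall x, In x l -> g x = h x) -> lsum g l = lsum h l.
Proof. induction l; simpl; intros H; auto. unfold lsum in *; simpl. rewrite H, IHl; auto. Qed.

Lemma lsum_add {T : Type} (g h : T -> R) l :
  lsum (fun x => g x + h x) l = lsum g l + lsum h l.
Proof. induction l; unfold lsum in *; simpl; [ring|]. rewrite IHl; ring. Qed.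

Lemma lsum_nonneg {T : Type} (g : T -> R) l : (forall x, 0 <= g x) -> 0 <= lsum g l.
Proof. intros H; induction l; unfold lsum in *; simpl; [lra|]. specialize (H a); lra. Qed.

Lemma lsum_ge_term {T : Type} (g : T -> R) l x :
  (forall x, 0 <= g x) -> In x l -> g x <= lsum g l.
Proof.
  intros H; induction l; simpl; [tauto|]. intros [e|i]; unfold lsum in *; simpl.
  - subst. pose proof (lsum_nonneg g l H); unfold lsum in *; lra.
  - specialize (IHl i); specialize (H a); lra.
Qed.

Lemma lsum_perm {T : Type} (g : T -> R) l l' : Permutation l l' -> lsum g l = lsum g l'.
Proof. induction 1; unfold lsum in *; simpl; lra. Qed.

Lemma lsum_filter {T : Type} (g : T -> R) (p : T -> bool) l :
  (forall x, p x = false -> g x = 0) -> lsum g l = lsum g (filter p l).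
Proof.
  intros H; induction l; simpl; auto. destruct (p a) eqn:E; unfold lsum in *; simpl;
  rewrite IHl; auto. rewrite (H a E); ring.
Qed.

Variable Omega : Type.

Definition enum (lam : Pfin Omega) : list Omega :=
  proj1_sig (constructive_indefinite_description _ (proj2_sig lam)).

Lemma enum_spec (lam : Pfin Omega) :
  NoDup (enum lam) /\ forall x, proj1_sig lam x <-> In x (enum lam).
Proof. unfold enum; destruct (constructive_indefinite_description _ _); simpl; auto. Qed.

Definition restrict (A : Omega -> Prop) (u : Omega -> R) (x : Omega) : R :=
  if excluded_middle_informative (A x) then u x else 0.

Lemma fsum_lsum (lam : Pfin Omega) A u : fsum lam A u = lsum (restrict A u) (enum lam).
Proof. reflexivity. Qed.

Lemma fsum_ext (lam : Pfin Omega) A B u :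
  (forall x, proj1_sig lam x -> (A x <-> B x)) -> fsum lam A u = fsum lam B u.
Proof.
  intros H; rewrite !fsum_lsum; apply lsum_ext; intros x Hx.
  apply (proj2 (enum_spec lam)), H in Hx. unfold restrict.
  destruct (excluded_middle_informative (A x)), (excluded_middle_informative (B x)); tauto.
Qed.

Lemma fsum_union (lam : Pfin Omega) A B u :
  (forall x, ~ (A x /\ B x)) -> fsum lam (fun x => A x \/ B x) u = fsum lam A u + fsum lam B u.
Proof.
  intros H; rewrite !fsum_lsum, <- lsum_add; apply lsum_ext; intros x _. unfold restrict.
  destruct (excluded_middle_informative (A x \/ B x)), (excluded_middle_informative (A x)),
    (excluded_middle_informative (B x)); try ring; firstorder.
Qed.

Variable u : Omega -> R.
Hypothesis u_pos : forall x, 0 < u x.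

Lemma fsum_nonneg (lam : Pfin Omega) A : 0 <= fsum lam A u.
Proof.
  rewrite fsum_lsum; apply lsum_nonneg; intro x; unfold restrict.
  destruct (excluded_middle_informative (A x)); [specialize (u_pos x)|]; lra.
Qed.

Lemma fsum_gap (lam : Pfin Omega) A x :
  proj1_sig lam x -> ~ A x -> fsum lam A u + u x <= fsum lam (fun _ => True) u.
Proof.
  intros Hx nA.
  rewrite (fsum_ext lam (fun _ => True) (fun y => A y \/ ~ A y))
    by (intros y _; split; [intros _; apply classic | auto]).
  rewrite fsum_union by tauto.
  enough (u x <= fsum lam (fun y => ~ A y) u) by lra.
  rewrite fsum_lsum.
  replace (u x) with (restrict (fun y => ~ A y) u x)
    by (unfold restrict; destruct (excluded_middle_informative (~ A x)); tauto).
  apply lsum_ge_term; [|apply (enum_spec lam); auto].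
  intro y; unfold restrict; destruct (excluded_middle_informative (~ A y));
    [specialize (u_pos y)|]; lra.
Qed.

Lemma fsum_total_pos (lam : Pfin Omega) x : proj1_sig lam x -> 0 < fsum lam (fun _ => True) u.
Proof.
  intros Hx. pose proof (fsum_gap lam (fun _ => False) x Hx (fun f => f)).
  pose proof (fsum_nonneg lam (fun _ => False)). specialize (u_pos x); lra.
Qed.

End FiniteSums.

Lemma fsum_restrict_subset {Omega : Type} (lam mu : Pfin Omega) A u :
  (forall x, proj1_sig lam x -> proj1_sig mu x) ->
  fsum mu (fun x => A x /\ proj1_sig lam x) u = fsum lam A u.
Proof.
  intros Hsub. rewrite !fsum_lsum.
  set (p := fun x => if excluded_middle_informative (proj1_sig lam x) then true else false).
  rewrite (lsum_filter _ p).
  2:{ intros x; unfold p, restrict.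
      destruct (excluded_middle_informative (proj1_sig lam x)); [discriminate|].
      destruct (excluded_middle_informative _); tauto. }
  destruct (enum_spec _ lam) as [N1 S1]; destruct (enum_spec _ mu) as [N2 S2].
  rewrite (lsum_perm _ _ (enum _ lam)).
  - apply lsum_ext; intros x Hx; apply S1 in Hx; unfold restrict.
    destruct (excluded_middle_informative (A x /\ proj1_sig lam x)),
      (excluded_middle_informative (A x)); tauto.
  - apply NoDup_Permutation; auto. apply NoDup_filter; auto.
    intro x; rewrite filter_In, <- S1, <- S2. unfold p.
    destruct (excluded_middle_informative (proj1_sig lam x)); split; intuition; discriminate.
Qed.

Section FineIdeal.

Variable Omega : Type.
Variable w : Omega -> R.
Variable I : Fun Omega -> Prop.
Hypothesis Hw : forall x, 0 < w x.
Hypothesis HI : is_fine_ideal I.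

Let HM : is_maximal_ideal I := proj1 HI.

Lemma large_contains (x : Omega) : large I (fun mu => proj1_sig mu x).
Proof.
  exists (fun lam => 1 - chi lam x); split; [apply (proj2 HI)|].
  intros l; unfold chi; destruct (excluded_middle_informative (proj1_sig l x)); auto; lra.
Qed.

Lemma large_supersets (lam : Pfin Omega) :
  large I (fun mu => forall x, proj1_sig lam x -> proj1_sig mu x).
Proof.
  assert (H : forall l, large I (fun mu => forall x, In x l -> proj1_sig mu x)).
  { induction l.
    - apply large_all; [exact HM|]. simpl; tauto.
    - apply (large_mono _ _ _ (large_and _ HM _ _ IHl (large_contains a))).
      intros mu [H1 H2] x [e|i]; subst; auto. }
  apply (large_mono _ _ _ (H (enum _ lam))). intros mu Hm x Hx; apply Hm, enum_spec; auto.
Qed.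

Definition ratio (A : Omega -> Prop) (lam : Pfin Omega) : R :=
  fsum lam A w * / fsum lam (fun _ => True) w.

Lemma P_I_JI (A : Omega -> Prop) : P_I I w A = JI I (ratio A).
Proof. unfold P_I, Qdiv, Isum. rewrite Qinv_JI, Qmul_JI by exact HM. reflexivity. Qed.

(** (NAP4, first half): on a nonempty finite lambda, P_I(A | lambda) is the
    real number ratio A lambda, because every large-many mu contain lambda. *)
Lemma Pcond_finite (A : Omega -> Prop) (lam : Pfin Omega) :
  (exists x, proj1_sig lam x) ->
  Pcond Qmul Qinv (P_I I w) A (proj1_sig lam) = Qemb I (ratio A lam).
Proof.
  intros [x1 H1]. unfold Pcond, Qemb, ratio. rewrite !P_I_JI, Qinv_JI, Qmul_JI by exact HM.
  apply JI_eq_iff; [exact HM|].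
  apply (large_mono _ _ _ (large_supersets lam)). intros mu Hs. unfold ratio.
  rewrite (fsum_restrict_subset lam mu A w Hs).
  rewrite (fsum_ext _ mu (proj1_sig lam) (fun x => True /\ proj1_sig lam x)) by tauto.
  rewrite (fsum_restrict_subset lam mu _ w Hs).
  pose proof (fsum_total_pos _ w Hw mu x1 (Hs x1 H1)).
  pose proof (fsum_total_pos _ w Hw lam x1 H1).
  field; lra.
Qed.

Lemma P_I_nonneg (A : Omega -> Prop) : Qle I (Qzero I) (P_I I w A).
Proof.
  rewrite P_I_JI. apply Qle_JI, large_all; [exact HM | exact HM|].
  intro l. unfold ratio. pose proof (fsum_nonneg _ w Hw l A).
  pose proof (fsum_nonneg _ w Hw l (fun _ => True)) as Ht.
  destruct (Rle_lt_or_eq_dec _ _ Ht) as [h|h].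
  - apply Rmult_le_pos; auto. apply Rlt_le, Rinv_0_lt_compat; auto.
  - rewrite <- h, Rinv_0, Rmult_0_r; lra.
Qed.

(** (NAP2): a point x outside A keeps the ratio below 1 on every mu containing x. *)
Lemma P_I_one_iff (x0 : Omega) (A : Omega -> Prop) : P_I I w A = Qone I <-> (forall x, A x).
Proof.
  rewrite P_I_JI. unfold Qone. rewrite JI_eq_iff by exact HM. split.
  - intros H. apply NNPP; intro N. apply not_all_ex_not in N. destruct N as [x nA].
    apply (not_large_empty _ HM).
    apply (large_mono _ _ _ (large_and _ HM _ _ H (large_contains x))).
    intros mu [e Hm]. unfold ratio in e.
    pose proof (fsum_gap _ w Hw mu A x Hm nA).
    pose proof (fsum_total_pos _ w Hw mu x Hm). specialize (Hw x).
    assert (fsum mu A w = fsum mu A w * / fsum mu (fun _ => True) w * fsum mu (fun _ => True) w)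
      by (field; lra). rewrite e in H2. lra.
  - intros HA. apply (large_mono _ _ _ (large_contains x0)). intros mu Hm. unfold ratio.
    rewrite (fsum_ext _ mu A (fun _ => True)) by (intros; split; auto).
    apply Rinv_r. pose proof (fsum_total_pos _ w Hw mu x0 Hm); lra.
Qed.

Lemma P_I_additive (A B : Omega -> Prop) :
  (forall x, ~ (A x /\ B x)) -> P_I I w (fun x => A x \/ B x) = Qadd (P_I I w A) (P_I I w B).
Proof.
  intros Hd. rewrite !P_I_JI, Qadd_JI by exact HM. apply JI_congr.
  intro mu; unfold ratio. rewrite fsum_union; auto; ring.
Qed.

(** (NAP4, second half): P_I(A) = J_I(phi) whenever phi lists the conditional
    probabilities on nonempty finite sets, since these are the ratios. *)
Lemma P_I_from_conditionals (x0 : Omega) (A : Omega -> Prop) (phi : Fun Omega) :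
  (forall lam : Pfin Omega, (exists x, proj1_sig lam x) ->
     Qemb I (phi lam) = Pcond Qmul Qinv (P_I I w) A (proj1_sig lam)) ->
  P_I I w A = JI I phi.
Proof.
  intros H. rewrite P_I_JI. apply JI_eq_iff; [exact HM|].
  apply (large_mono _ _ _ (large_contains x0)). intros mu Hm.
  assert (Hne : exists x, proj1_sig mu x) by (exists x0; auto).
  pose proof (H mu Hne) as E. rewrite (Pcond_finite A mu Hne) in E. unfold Qemb in E.
  apply JI_eq_iff in E; [|exact HM]. symmetry; apply (large_const _ HM _ E).
Qed.

End FineIdeal.

Theorem mainTheorem8 (Omega : Type) (w : Omega -> R) (I : Fun Omega -> Prop)
  (HOmega : infinite_type Omega)
  (Hw : forall x, 0 < w x)
  (HI : is_fine_ideal I) :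
  exists le : Quot I -> Quot I -> Prop,
    is_superreal_field (Qzero I) (Qone I) Qadd Qmul Qopp le (Qemb I) /\
    NAP_axioms (Qzero I) (Qone I) Qadd Qmul Qinv le (Qemb I) (P_I I w) (JI I).
Proof.
  pose proof (proj1 HI) as HM.
  assert (Hinh : inhabited Omega).
  { apply NNPP; intro N. apply HOmega. exists nil. intro x. now apply N. }
  destruct Hinh as [x0].
  exists (Qle I). split; [apply Quot_superreal; exact HM|].
  repeat split.
  - intros f g; apply eq_sym, Qadd_JI, HM.
  - intros f g; apply eq_sym, Qmul_JI, HM.
  - intros r f; apply eq_sym, Qmul_JI, HM.
  - apply P_I_nonneg; assumption.
  - apply (P_I_one_iff Omega w I Hw HI x0).
  - apply (P_I_one_iff Omega w I Hw HI x0).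
  - apply P_I_additive; assumption.
  - intros A lam Hne. eexists; apply Pcond_finite; assumption.
  - apply (P_I_from_conditionals Omega w I Hw HI x0).
Qed.
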